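(* Identify the tangent space of $\mathbb OH^2$ at $P_0=(0,0)$ with $\mathbb O^2$, a pair $(a,b)$ corresponding to the tangent vector with $du=a$, $dv=b$. Then the Riemann curvature tensor of $\mathbb OH^2$ at $P_0$ is $$\begin{aligned}R\big((a,b),(c,d),(e,f),(g,h)\big)=-\Big[&\,4\langle a,e\rangle\langle c,g\rangle-4\langle c,e\rangle\langle a,g\rangle+4\langle b,f\rangle\langle d,h\rangle-4\langle d,f\rangle\langle b,h\rangle\\&-\langle e\bar d,g\bar b\rangle+\langle e\bar b,g\bar d\rangle-\langle c\bar f,a\bar h\rangle+\langle a\bar f,c\bar h\rangle-\langle a\bar d-c\bar b,\ g\bar f-e\bar h\rangle\Big],\end{aligned}$$ i.e. the negative of the curvature tensor of $\mathbb OP^2$ at $[1,0,0]$.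
   Context: Octonions $\mathbb O=\mathbb H\oplus\mathbb H$ with product $(q_1,q_2)(p_1,p_2)=(q_1p_1-\bar p_2q_2,\ p_2q_1+q_2\bar p_1)$, conjugation $\overline{(q_1,q_2)}=(\bar q_1,-q_2)$, $\langle a,b\rangle=\mathrm{Re}(a\bar b)$, $|a|^2=\langle a,a\rangle$. $\mathbb OH^2=\{(u,v)\in\mathbb O^2:|u|^2+|v|^2<1\}$ with the Riemannian metric whose quadratic form on tangent vectors $(du,dv)=(\xi,\eta)$ is $ds^2=\frac{|\xi|^2(1-|v|^2)+|\eta|^2(1-|u|^2)+2\mathrm{Re}[(u\bar v)(\eta\bar\xi)]}{(1-|u|^2-|v|^2)^2}$. Curvature convention: in coordinates in which first derivatives of the metric vanish at the point, $R_{\alpha\beta\gamma\delta}=\tfrac12\big[\partial_\alpha\partial_\delta g_{\beta\gamma}+\partial_\beta\partial_\gamma g_{\alpha\delta}-\partial_\beta\partial_\delta g_{\alpha\gamma}-\partial_\alpha\partial_\gamma g_{\beta\delta}\big]$. *)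

From Stdlib Require Import Reals.
From Coquelicot Require Import Coquelicot.
Open Scope R_scope.

Record quat := mkH { h0 : R; h1 : R; h2 : R; h3 : R }.

Definition Hadd (p q : quat) : quat :=
  mkH (h0 p + h0 q) (h1 p + h1 q) (h2 p + h2 q) (h3 p + h3 q).
Definition Hopp (p : quat) : quat := mkH (- h0 p) (- h1 p) (- h2 p) (- h3 p).
Definition Hsub (p q : quat) : quat := Hadd p (Hopp q).
Definition Hscale (r : R) (p : quat) : quat :=
  mkH (r * h0 p) (r * h1 p) (r * h2 p) (r * h3 p).
Definition Hmul (p q : quat) : quat :=
  mkH (h0 p * h0 q - h1 p * h1 q - h2 p * h2 q - h3 p * h3 q)
      (h0 p * h1 q + h1 p * h0 q + h2 p * h3 q - h3 p * h2 q)
      (h0 p * h2 q - h1 p * h3 q + h2 p * h0 q + h3 p * h1 q)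
      (h0 p * h3 q + h1 p * h2 q - h2 p * h1 q + h3 p * h0 q).
Definition Hconj (p : quat) : quat := mkH (h0 p) (- h1 p) (- h2 p) (- h3 p).

Record oct := mkO { oq1 : quat; oq2 : quat }.

Definition Oadd (x y : oct) : oct := mkO (Hadd (oq1 x) (oq1 y)) (Hadd (oq2 x) (oq2 y)).
Definition Osub (x y : oct) : oct := mkO (Hsub (oq1 x) (oq1 y)) (Hsub (oq2 x) (oq2 y)).
Definition Oscale (r : R) (x : oct) : oct := mkO (Hscale r (oq1 x)) (Hscale r (oq2 x)).
Definition Omul (x y : oct) : oct :=
  mkO (Hsub (Hmul (oq1 x) (oq1 y)) (Hmul (Hconj (oq2 y)) (oq2 x)))
      (Hadd (Hmul (oq2 y) (oq1 x)) (Hmul (oq2 x) (Hconj (oq1 y)))).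
Definition Oconj (x : oct) : oct := mkO (Hconj (oq1 x)) (Hopp (oq2 x)).
Definition ORe (x : oct) : R := h0 (oq1 x).
Definition Oinner (a b : oct) : R := ORe (Omul a (Oconj b)).
Definition Onorm2 (a : oct) : R := Oinner a a.

Definition O2 : Type := (oct * oct)%type.
Definition O2add (x y : O2) : O2 := (Oadd (fst x) (fst y), Oadd (snd x) (snd y)).
Definition O2sub (x y : O2) : O2 := (Osub (fst x) (fst y), Osub (snd x) (snd y)).
Definition O2scale (r : R) (x : O2) : O2 := (Oscale r (fst x), Oscale r (snd x)).
Definition O2zero : O2 :=
  let z := mkO (mkH 0 0 0 0) (mkH 0 0 0 0) in (z, z).

(* Quadratic form ds^2 of the metric of OH^2 at the point p = (u,v),
   evaluated on the tangent vector X = (du,dv) = (xi,eta). *)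
Definition OH2_ds2 (p X : O2) : R :=
  let u := fst p in let v := snd p in let xi := fst X in let eta := snd X in
  (Onorm2 xi * (1 - Onorm2 v) + Onorm2 eta * (1 - Onorm2 u)
     + 2 * ORe (Omul (Omul u (Oconj v)) (Omul eta (Oconj xi))))
  / (1 - Onorm2 u - Onorm2 v) ^ 2.

Definition OH2_metric (p X Y : O2) : R :=
  (OH2_ds2 p (O2add X Y) - OH2_ds2 p (O2sub X Y)) / 4.

Definition mixed2_at0 (F : O2 -> R) (V W : O2) : R :=
  Derive (fun s => Derive (fun t => F (O2add (O2scale s V) (O2scale t W))) 0) 0.

(* Riemann curvature tensor of OH^2 at P0 = (0,0), computed in the coordinates
   (u,v) (whose metric has vanishing first derivatives at P0), with the
   convention R_{abcd} = 1/2 [d_a d_d g_bc + d_b d_c g_ad - d_b d_d g_ac - d_a d_c g_bd],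
   extended multilinearly to tangent vectors X,Y,Z,W in O^2. *)
Definition OH2_curvature_at0 (X Y Z W : O2) : R :=
  / 2 * ( mixed2_at0 (fun p => OH2_metric p Y Z) X W
        + mixed2_at0 (fun p => OH2_metric p X W) Y Z
        - mixed2_at0 (fun p => OH2_metric p X Z) Y W
        - mixed2_at0 (fun p => OH2_metric p Y W) X Z ).

From Stdlib Require Import Reals Lra.
From Coquelicot Require Import Coquelicot.
Open Scope R_scope.

(* In the coordinates (u,v) the metric is g = N / D^2, where the numerator N
   and the denominator D = 1 - |u|^2 - |v|^2 have no terms of degree one in
   (u,v); hence the first derivatives of g vanish at the origin and the mixed
   second derivative of g along s X + t W only involves the constant and
   quadratic Taylor coefficients: it is n2 + 2 n0 d2 for
   (n0 + n1 s^2 + n2 s t + n3 t^2) / (1 - d1 s^2 - d2 s t - d3 t^2)^2.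
   Inserting these coefficients into the curvature formula leaves a
   polynomial identity in the 64 real coordinates of the eight octonions. *)

Definition ORe_mulconj (x y m : oct) : R := ORe (Omul (Omul x (Oconj y)) m).

Ltac oct_coordinates :=
  repeat match goal with x : oct |- _ => destruct x as [[? ? ? ?] [? ? ? ?]] end;
  cbv [ORe_mulconj Oinner Onorm2 ORe Omul Oconj Osub Oadd Oscale
       Hscale Hsub Hadd Hopp Hmul Hconj oq1 oq2 h0 h1 h2 h3].

Lemma Onorm2_add_sub (x y : oct) :
  Onorm2 (Oadd x y) = Onorm2 (Osub x y) + 4 * Oinner x y.
Proof. oct_coordinates; ring. Qed.

Lemma ORe_mul_add_sub (w c d e f : oct) :
  ORe (Omul w (Omul (Oadd d f) (Oconj (Oadd c e)))) =
  ORe (Omul w (Omul (Osub d f) (Oconj (Osub c e))))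
  + 2 * (ORe (Omul w (Omul d (Oconj e))) + ORe (Omul w (Omul f (Oconj c)))).
Proof. oct_coordinates; ring. Qed.

Lemma Onorm2_lincomb (s t : R) (x y : oct) :
  Onorm2 (Oadd (Oscale s x) (Oscale t y)) =
  s ^ 2 * Onorm2 x + 2 * s * t * Oinner x y + t ^ 2 * Onorm2 y.
Proof. oct_coordinates; ring. Qed.

Lemma ORe_mulconj_lincomb (s t : R) (x y z w m : oct) :
  ORe_mulconj (Oadd (Oscale s x) (Oscale t y)) (Oadd (Oscale s z) (Oscale t w)) m =
  s ^ 2 * ORe_mulconj x z m + s * t * (ORe_mulconj x w m + ORe_mulconj y z m)
  + t ^ 2 * ORe_mulconj y w m.
Proof. oct_coordinates; ring. Qed.

Lemma OH2_metric_eq (u v c d e f : oct) :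
  OH2_metric (u, v) (c, d) (e, f) =
  (Oinner c e * (1 - Onorm2 v) + Oinner d f * (1 - Onorm2 u)
   + ORe_mulconj u v (Omul d (Oconj e)) + ORe_mulconj u v (Omul f (Oconj c)))
  / (1 - Onorm2 u - Onorm2 v) ^ 2.
Proof.
  unfold OH2_metric, OH2_ds2, O2add, O2sub; cbn [fst snd].
  rewrite (Onorm2_add_sub c e), (Onorm2_add_sub d f), ORe_mul_add_sub.
  unfold ORe_mulconj, Rdiv.
  set (D := / (1 - Onorm2 u - Onorm2 v) ^ 2).
  field.
Qed.

Lemma locally_neq0_continuous (f : R -> R) (x : R) :
  continuous f x -> f x <> 0 -> locally x (fun y => f y <> 0).
Proof. intros Hf Hfx. exact (Hf _ (open_neq 0 _ Hfx)). Qed.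

Lemma Derive_mixed_quadratic_ratio (Q : R -> R -> R) (n0 n1 n2 n3 d1 d2 d3 : R) :
  (forall s t, Q s t =
     (n0 + n1 * s ^ 2 + n2 * s * t + n3 * t ^ 2)
     / (1 - d1 * s ^ 2 - d2 * s * t - d3 * t ^ 2) ^ 2) ->
  Derive (fun s => Derive (fun t => Q s t) 0) 0 = n2 + 2 * n0 * d2.
Proof.
  intros HQ.
  set (D s := 1 - d1 * s ^ 2).
  assert (HD : locally 0 (fun s => D s <> 0)).
  { apply locally_neq0_continuous.
    - apply (ex_derive_continuous D); unfold D; auto_derive; exact I.
    - unfold D; lra. }
  rewrite (Derive_ext_loc _ (fun s =>
             n2 * s / D s ^ 2 + 2 * (n0 + n1 * s ^ 2) * d2 * s / D s ^ 3) 0).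
  - apply is_derive_unique; unfold D.
    auto_derive.
    + repeat split; simpl; lra.
    + field.
  - eapply filter_imp; [| exact HD]; intros s Hs.
    apply is_derive_unique.
    apply (is_derive_ext (fun t => (n0 + n1 * s ^ 2 + n2 * s * t + n3 * t ^ 2)
                                   / (1 - d1 * s ^ 2 - d2 * s * t - d3 * t ^ 2) ^ 2)).
    { intros t; symmetry; apply HQ. }
    unfold D in Hs |- *.
    (* [auto_derive] leaves the denominator at [t = 0] unsimplified. *)
    auto_derive;
      replace (1 - d1 * (s * (s * 1)) + - (d2 * s * 0) + - (d3 * (0 * (0 * 1))))
        with (1 - d1 * s ^ 2) by ring.
    + rewrite Rmult_1_r; now apply Rmult_integral_contrapositive_currified.
    + field; exact Hs.
Qed.

Definition OH2_metric_hessian0 (a b g h c d e f : oct) : R :=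
  4 * Oinner c e * Oinner a g + 2 * Oinner c e * Oinner b h
  + 2 * Oinner d f * Oinner a g + 4 * Oinner d f * Oinner b h
  + ORe_mulconj a h (Omul d (Oconj e)) + ORe_mulconj g b (Omul d (Oconj e))
  + ORe_mulconj a h (Omul f (Oconj c)) + ORe_mulconj g b (Omul f (Oconj c)).

Lemma mixed2_at0_OH2_metric (a b g h c d e f : oct) :
  mixed2_at0 (fun p => OH2_metric p (c, d) (e, f)) (a, b) (g, h) =
  OH2_metric_hessian0 a b g h c d e f.
Proof.
  unfold mixed2_at0.
  set (T x y := ORe_mulconj x y (Omul d (Oconj e)) + ORe_mulconj x y (Omul f (Oconj c))).
  rewrite (Derive_mixed_quadratic_ratio _
    (Oinner c e + Oinner d f)
    (- Oinner c e * Onorm2 b - Oinner d f * Onorm2 a + T a b)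
    (- 2 * Oinner c e * Oinner b h - 2 * Oinner d f * Oinner a g + T a h + T g b)
    (- Oinner c e * Onorm2 h - Oinner d f * Onorm2 g + T g h)
    (Onorm2 a + Onorm2 b) (2 * (Oinner a g + Oinner b h)) (Onorm2 g + Onorm2 h)).
  - unfold OH2_metric_hessian0, T; ring.
  - intros s t; unfold O2add, O2scale, T; cbn [fst snd].
    rewrite OH2_metric_eq, !Onorm2_lincomb, !ORe_mulconj_lincomb.
    unfold Rdiv; f_equal; [ring | f_equal; ring].
Qed.

Lemma OH2_metric_hessian0_curvature_combination (a b c d e f g h : oct) :
  / 2 * ( OH2_metric_hessian0 a b g h c d e f + OH2_metric_hessian0 c d e f a b g h
        - OH2_metric_hessian0 c d g h a b e f - OH2_metric_hessian0 a b e f c d g h ) =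
  - ( 4 * Oinner a e * Oinner c g - 4 * Oinner c e * Oinner a g
    + 4 * Oinner b f * Oinner d h - 4 * Oinner d f * Oinner b h
    - Oinner (Omul e (Oconj d)) (Omul g (Oconj b))
    + Oinner (Omul e (Oconj b)) (Omul g (Oconj d))
    - Oinner (Omul c (Oconj f)) (Omul a (Oconj h))
    + Oinner (Omul a (Oconj f)) (Omul c (Oconj h))
    - Oinner (Osub (Omul a (Oconj d)) (Omul c (Oconj b)))
             (Osub (Omul g (Oconj f)) (Omul e (Oconj h))) ).
Proof. unfold OH2_metric_hessian0; oct_coordinates; field. Qed.

Theorem theorem8p4 (a b c d e f g h : oct) :
  OH2_curvature_at0 (a, b) (c, d) (e, f) (g, h) =
  - ( 4 * Oinner a e * Oinner c g - 4 * Oinner c e * Oinner a g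
    + 4 * Oinner b f * Oinner d h - 4 * Oinner d f * Oinner b h
    - Oinner (Omul e (Oconj d)) (Omul g (Oconj b))
    + Oinner (Omul e (Oconj b)) (Omul g (Oconj d))
    - Oinner (Omul c (Oconj f)) (Omul a (Oconj h))
    + Oinner (Omul a (Oconj f)) (Omul c (Oconj h))
    - Oinner (Osub (Omul a (Oconj d)) (Omul c (Oconj b)))
             (Osub (Omul g (Oconj f)) (Omul e (Oconj h))) ).
Proof.
  unfold OH2_curvature_at0.
  rewrite !mixed2_at0_OH2_metric.
  apply OH2_metric_hessian0_curvature_combination.
Qed.
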